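(* If $x\ge1$ then $\Gamma(x,x)\ge\dfrac{\Gamma(x)}{x^{x}}$, and if $0<x\le1$ then $\Gamma(x,x)\le\dfrac{\Gamma(x)}{x^{x}}$.
   Context: For $x>0,y>0$ the Bigamma function is the (convergent) improper integral $\Gamma(x,y):=\int_0^1(-\ln t)^{x-1}\big(-\ln(1-t)\big)^{y-1}\,dt$. $\Gamma(x)$ (one argument) denotes Euler's gamma function. *)

From Stdlib Require Import Reals.
From Coquelicot Require Import Coquelicot.
Open Scope R_scope.

Definition EulerGamma (x : R) : R :=
  RInt_gen (fun t => Rpower t (x - 1) * exp (- t))
           (at_right 0) (Rbar_locally p_infty).

Definition Bigamma (x y : R) : R :=
  RInt_gen (fun t => Rpower (- ln t) (x - 1) * Rpower (- ln (1 - t)) (y - 1))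
           (at_right 0) (at_left 1).

(* Substituting [s = - x ln t] in Euler's integral gives
   [Gamma(x) / x^x = int_0^1 (-ln t)^(x-1) t^(x-1) dt], an integral over the same interval as
   [Bigamma(x,x) = int_0^1 (-ln t)^(x-1) (-ln (1-t))^(x-1) dt].  Since [t <= -ln (1-t)], the
   integrands compare pointwise, in one direction when [x >= 1] and in the other when [x <= 1].
   The improper integrals exist because the integrands are nonnegative and dominated: by [1]
   when [x >= 1] (as [(-ln t) (-ln (1-t)) <= 1]) and by [2 (t^(x-1) + (1-t)^(x-1))] when
   [x <= 1]. *)

From Stdlib Require Import Reals Lra Psatz Classical.
From Coquelicot Require Import Coquelicot.
Open Scope R_scope.

Lemma ball_R (c e y : R) : ball c e y <-> Rabs (y - c) < e.
Proof. reflexivity. Qed.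

Lemma at_right_interval a c : a < c -> at_right a (fun y => a < y < c).
Proof.
  intros Hac. apply (locally_open (fun y => y < c)); [apply open_lt | | exact Hac].
  intros y Hy Hay. lra.
Qed.

Lemma at_left_interval c b : c < b -> at_left b (fun y => c < y < b).
Proof.
  intros Hcb. apply (locally_open (fun y => c < y)); [apply open_gt | | exact Hcb].
  intros y Hy Hyb. lra.
Qed.

Lemma filter_prod_interval a b : a < b ->
  filter_prod (at_right a) (at_left b) (fun ab => a < fst ab <= snd ab /\ snd ab < b).
Proof.
  intros Hab.
  apply Filter_prod with (fun y => a < y < (a + b) / 2) (fun y => (a + b) / 2 < y < b).
  - apply at_right_interval; lra.
  - apply at_left_interval; lra.
  - simpl; intros; lra.
Qed.

Definition is_lim_RInt (f : R -> R) (Fa Fb : (R -> Prop) -> Prop) (l : R) :=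
  filterlim (fun ab => RInt f (fst ab) (snd ab)) (filter_prod Fa Fb) (locally l).

Lemma is_RInt_gen_of_is_lim_RInt {Fa Fb : (R -> Prop) -> Prop} {FFa : Filter Fa} {FFb : Filter Fb}
  (f : R -> R) l :
  filter_prod Fa Fb (fun ab => ex_RInt f (fst ab) (snd ab)) ->
  is_lim_RInt f Fa Fb l -> is_RInt_gen f Fa Fb l.
Proof.
  intros Hex Hl. apply (filterlimi_lim_ext_loc (fun ab => RInt f (fst ab) (snd ab))); [|exact Hl].
  eapply filter_imp; [|exact Hex]. intros ab; apply (@RInt_correct R_CompleteNormedModule).
Qed.

Section OpenInterval.

Variables (a b : R) (f : R -> R).
Hypothesis f_cont : forall t, a < t < b -> continuous f t.

Lemma ex_RInt_open u v : a < u -> u <= v -> v < b -> ex_RInt f u v.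
Proof.
  intros Hu Huv Hv. apply (@ex_RInt_continuous R_CompleteNormedModule).
  rewrite Rmin_left, Rmax_right by lra. intros t Ht; apply f_cont; lra.
Qed.

Lemma RInt_open_le (g : R -> R) u v :
  (forall t, a < t < b -> continuous g t) -> (forall t, a < t < b -> f t <= g t) ->
  a < u -> u <= v -> v < b -> RInt f u v <= RInt g u v.
Proof.
  intros g_cont Hfg Hu Huv Hv.
  apply RInt_le; [lra | apply ex_RInt_open; lra | | intros; apply Hfg; lra].
  apply (@ex_RInt_continuous R_CompleteNormedModule).
  rewrite Rmin_left, Rmax_right by lra. intros t Ht; apply g_cont; lra.
Qed.

Hypothesis f_ge_0 : forall t, a < t < b -> 0 <= f t.

Lemma RInt_open_subinterval_le u v u' v' :
  a < u' -> u' <= u -> u <= v -> v <= v' -> v' < b -> RInt f u v <= RInt f u' v'.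
Proof.
  intros Hu' Hu Huv Hv Hv'.
  assert (Hleft : 0 <= RInt f u' u)
    by (apply RInt_ge_0; [lra | apply ex_RInt_open; lra | intros; apply f_ge_0; lra]).
  assert (Hright : 0 <= RInt f v v')
    by (apply RInt_ge_0; [lra | apply ex_RInt_open; lra | intros; apply f_ge_0; lra]).
  rewrite <- (RInt_Chasles f u' u v'), <- (RInt_Chasles f u v v')
    by (apply ex_RInt_open; lra).
  unfold plus; simpl; lra.
Qed.

(* Partial integrals increase as [u, v] grows, so their supremum is the limit. *)
Lemma is_lim_RInt_of_bounded M : a < b ->
  (forall u v, a < u -> u <= v -> v < b -> RInt f u v <= M) ->
  exists l, is_lim_RInt f (at_right a) (at_left b) l.
Proof.
  intros Hab HM.
  set (E := fun y => exists u v, a < u /\ u <= v /\ v < b /\ y = RInt f u v).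
  destruct (completeness E) as [l [Hub Hlub]].
  { exists M. intros y (u & v & Hu & Huv & Hv & ->). apply HM; lra. }
  { exists (RInt f ((a + b) / 2) ((a + b) / 2)), ((a + b) / 2), ((a + b) / 2).
    repeat split; lra. }
  exists l. intros P [eps Heps].
  assert (Hnear : exists u0 v0, a < u0 <= v0 /\ v0 < b /\ l - eps < RInt f u0 v0).
  { apply NNPP. intros Hno.
    assert (l <= l - eps); [|destruct eps; simpl in *; lra].
    apply Hlub. intros y (u & v & Hu & Huv & Hv & ->).
    apply Rnot_lt_le. intros Hlt. apply Hno. exists u, v. repeat split; lra. }
  destruct Hnear as (u0 & v0 & Huv0 & Hv0 & Hclose).
  apply Filter_prod with (fun y => a < y < u0) (fun y => v0 < y < b).
  - apply at_right_interval; lra.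
  - apply at_left_interval; lra.
  - intros u v Hu Hv. apply Heps, ball_R; simpl.
    assert (RInt f u0 v0 <= RInt f u v)
      by (apply RInt_open_subinterval_le; lra).
    assert (RInt f u v <= l) by (apply Hub; exists u, v; repeat split; lra).
    apply Rabs_lt_between; lra.
Qed.

End OpenInterval.

Lemma is_lim_RInt_dominated a b (f g : R -> R) M : a < b ->
  (forall t, a < t < b -> continuous f t) -> (forall t, a < t < b -> continuous g t) ->
  (forall t, a < t < b -> 0 <= f t <= g t) ->
  (forall u v, a < u -> u <= v -> v < b -> RInt g u v <= M) ->
  exists l, is_lim_RInt f (at_right a) (at_left b) l.
Proof.
  intros Hab f_cont g_cont Hfg HM.
  apply (is_lim_RInt_of_bounded a b f f_cont (fun t Ht => proj1 (Hfg t Ht)) M Hab).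
  intros u v Hu Huv Hv. eapply Rle_trans; [|apply (HM u v Hu Huv Hv)].
  apply (RInt_open_le a b); auto. intros t Ht; apply Hfg; exact Ht.
Qed.

Lemma is_lim_RInt_le a b (f g : R -> R) lf lg : a < b ->
  (forall t, a < t < b -> continuous f t) -> (forall t, a < t < b -> continuous g t) ->
  (forall t, a < t < b -> f t <= g t) ->
  is_lim_RInt f (at_right a) (at_left b) lf -> is_lim_RInt g (at_right a) (at_left b) lg ->
  lf <= lg.
Proof.
  intros Hab f_cont g_cont Hfg Hf Hg.
  apply (filterlim_le (F := filter_prod (at_right a) (at_left b))
           (fun ab => RInt f (fst ab) (snd ab)) (fun ab => RInt g (fst ab) (snd ab))
           lf lg); [|exact Hf|exact Hg].
  eapply filter_imp; [|apply (filter_prod_interval a b Hab)].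
  intros [u v] Huv; simpl in *. apply (RInt_open_le a b); auto; lra.
Qed.

Lemma is_lim_RInt_reparam {Fa Fb Ga Gb : (R -> Prop) -> Prop}
  {FFa : Filter Fa} {FFb : Filter Fb} (f g psi : R -> R) k l :
  filterlim psi Fa Gb -> filterlim psi Fb Ga ->
  filter_prod Fa Fb
    (fun ab => RInt f (fst ab) (snd ab) = k * RInt g (psi (snd ab)) (psi (fst ab))) ->
  is_lim_RInt g Ga Gb l -> is_lim_RInt f Fa Fb (k * l).
Proof.
  intros Ha Hb Heq Hl.
  eapply filterlim_ext_loc; [apply (filter_imp _ _ (fun ab H => eq_sym H) Heq)|].
  apply (filterlim_comp _ _ _ (fun ab => RInt g (psi (snd ab)) (psi (fst ab))) (fun z => k * z)
           _ (locally l)).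
  - apply (filterlim_comp _ _ _ (fun ab => (psi (snd ab), psi (fst ab)))
             (fun ab => RInt g (fst ab) (snd ab)) _ (filter_prod Ga Gb)); [|exact Hl].
    apply filterlim_pair.
    + apply (filterlim_comp _ _ _ snd psi _ Fb); [apply filterlim_snd | exact Hb].
    + apply (filterlim_comp _ _ _ fst psi _ Fa); [apply filterlim_fst | exact Ha].
  - exact (filterlim_scal_r (K := R_AbsRing) (V := R_NormedModule) k l).
Qed.

Lemma ln_le_sub_1 y : 0 < y -> ln y <= y - 1.
Proof. intros Hy. pose proof (exp_ineq1_le (ln y)) as H. rewrite exp_ln in H; lra. Qed.

Lemma neg_ln_gt_0 t : 0 < t < 1 -> 0 < - ln t.
Proof.
  intros Ht. assert (H : ln t < ln 1) by (apply ln_increasing; lra). rewrite ln_1 in H. lra.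
Qed.

Lemma le_neg_ln_1_minus t : t < 1 -> t <= - ln (1 - t).
Proof. intros Ht. pose proof (ln_le_sub_1 (1 - t)). lra. Qed.

Lemma neg_ln_le_inv_sub_1 y : 0 < y -> - ln y <= / y - 1.
Proof.
  intros Hy. rewrite <- ln_Rinv by exact Hy. apply ln_le_sub_1, Rinv_0_lt_compat, Hy.
Qed.

(* With [s = sqrt t]: [-ln t <= 2 (1/s - 1)] and [-ln (1 - t) <= 2 t], whose product is
   [4 s (1 - s) <= 1]. *)
Lemma neg_ln_mul_neg_ln_1_minus_le_1_half t : 0 < t <= / 2 -> (- ln t) * (- ln (1 - t)) <= 1.
Proof.
  intros Ht. set (s := sqrt t).
  assert (Hs : 0 < s) by (apply sqrt_lt_R0; lra).
  assert (Hss : s * s = t) by (apply sqrt_sqrt; lra).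
  assert (Hlog_s : - ln t <= 2 * (/ s - 1)).
  { rewrite <- Hss, ln_mult by exact Hs. pose proof (neg_ln_le_inv_sub_1 s Hs). lra. }
  assert (Hlog_1t : - ln (1 - t) <= 2 * t).
  { pose proof (neg_ln_le_inv_sub_1 (1 - t) ltac:(lra)).
    assert (/ (1 - t) <= 1 + 2 * t); [|lra].
    apply (Rmult_le_reg_r (1 - t)); [lra|]. rewrite Rinv_l by lra. nra. }
  pose proof (neg_ln_gt_0 t ltac:(lra)). pose proof (neg_ln_gt_0 (1 - t) ltac:(lra)).
  apply Rle_trans with ((2 * (/ s - 1)) * (2 * t)); [apply Rmult_le_compat; lra|].
  replace (2 * (/ s - 1) * (2 * t)) with (4 * (s - s * s)) by (rewrite <- Hss; field; lra).
  pose proof (Rle_0_sqr (2 * s - 1)). unfold Rsqr in *. lra.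
Qed.

Lemma neg_ln_mul_neg_ln_1_minus_le_1 t : 0 < t < 1 -> (- ln t) * (- ln (1 - t)) <= 1.
Proof.
  intros Ht. destruct (Rle_or_lt t (/ 2)).
  - apply neg_ln_mul_neg_ln_1_minus_le_1_half; lra.
  - rewrite Rmult_comm. replace t with (1 - (1 - t)) at 2 by ring.
    apply neg_ln_mul_neg_ln_1_minus_le_1_half; lra.
Qed.

Lemma Rpower_gt_0 a p : 0 < Rpower a p.
Proof. apply exp_pos. Qed.

Lemma Rpower_1_l p : Rpower 1 p = 1.
Proof. unfold Rpower. rewrite ln_1, Rmult_0_r. apply exp_0. Qed.

Lemma Rle_Rpower_l_nonpos a b c : c <= 0 -> 0 < a <= b -> Rpower b c <= Rpower a c.
Proof.
  intros Hc Hab. replace c with (- - c) by ring.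
  rewrite (Rpower_Ropp b (- c)), (Rpower_Ropp a (- c)).
  apply Rinv_le_contravar; [apply Rpower_gt_0 | apply Rle_Rpower_l; lra].
Qed.

Lemma Rpower_half_le_2 x : 0 <= x -> Rpower (/ 2) (x - 1) <= 2.
Proof.
  intros Hx. unfold Rpower at 1. rewrite ln_Rinv by lra.
  replace ((x - 1) * - ln 2) with ((1 - x) * ln 2) by ring. fold (Rpower 2 (1 - x)).
  rewrite <- (Rpower_1 2) at 2 by lra. apply Rle_Rpower; lra.
Qed.

Lemma is_derive_Rpower_l p s : 0 < s -> is_derive (fun t => Rpower t p) s (p * Rpower s (p - 1)).
Proof. intros Hs. apply is_derive_Reals, derivable_pt_lim_power, Hs. Qed.

Lemma Rpower_le_1 a p : 0 <= p -> 0 < a <= 1 -> Rpower a p <= 1.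
Proof.
  intros Hp Ha. apply Rle_trans with (Rpower 1 p); [apply Rle_Rpower_l; lra|].
  rewrite Rpower_1_l; lra.
Qed.

Definition bigamma_integrand x t := Rpower (- ln t) (x - 1) * Rpower (- ln (1 - t)) (x - 1).

Definition gamma_integrand x t := Rpower t (x - 1) * exp (- t).

(* The substitution [s = - x ln t] turns [gamma_integrand x s ds] into
   [x ^ x * rescaled_gamma_integrand x t dt] on [0 < t < 1]. *)
Definition rescaled_gamma_integrand x t := Rpower (- ln t) (x - 1) * Rpower t (x - 1).

Definition beta_majorant x t := 2 * (Rpower t (x - 1) + Rpower (1 - t) (x - 1)).

Lemma continuous_bigamma_integrand x t : 0 < t < 1 -> continuous (bigamma_integrand x) t.
Proof.
  intros Ht. apply (@ex_derive_continuous R_AbsRing R_NormedModule).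
  pose proof (neg_ln_gt_0 t Ht). pose proof (neg_ln_gt_0 (1 - t) ltac:(lra)).
  unfold bigamma_integrand, Rpower. auto_derive. rewrite <- (Rminus_def 1 t). repeat split; lra.
Qed.

Lemma continuous_gamma_integrand x t : 0 < t -> continuous (gamma_integrand x) t.
Proof.
  intros Ht. apply (@ex_derive_continuous R_AbsRing R_NormedModule).
  unfold gamma_integrand, Rpower. auto_derive. exact Ht.
Qed.

Lemma continuous_rescaled_gamma_integrand x t : 0 < t < 1 ->
  continuous (rescaled_gamma_integrand x) t.
Proof.
  intros Ht. apply (@ex_derive_continuous R_AbsRing R_NormedModule).
  pose proof (neg_ln_gt_0 t Ht).
  unfold rescaled_gamma_integrand, Rpower. auto_derive. repeat split; lra.
Qed.

Lemma continuous_beta_majorant x t : 0 < t < 1 -> continuous (beta_majorant x) t.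
Proof.
  intros Ht. apply (@ex_derive_continuous R_AbsRing R_NormedModule).
  unfold beta_majorant, Rpower. auto_derive. repeat split; lra.
Qed.

Lemma bigamma_integrand_ge_0 x t : 0 <= bigamma_integrand x t.
Proof.
  unfold bigamma_integrand.
  pose proof (Rpower_gt_0 (- ln t) (x - 1)). pose proof (Rpower_gt_0 (- ln (1 - t)) (x - 1)). nra.
Qed.

Lemma rescaled_gamma_integrand_ge_0 x t : 0 <= rescaled_gamma_integrand x t.
Proof.
  unfold rescaled_gamma_integrand.
  pose proof (Rpower_gt_0 (- ln t) (x - 1)). pose proof (Rpower_gt_0 t (x - 1)). nra.
Qed.

Lemma rescaled_gamma_integrand_le_bigamma_integrand x t : 1 <= x -> 0 < t < 1 ->
  rescaled_gamma_integrand x t <= bigamma_integrand x t.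
Proof.
  intros Hx Ht. apply Rmult_le_compat_l; [left; apply Rpower_gt_0|].
  apply Rle_Rpower_l; [lra | split; [lra | apply le_neg_ln_1_minus; lra]].
Qed.

Lemma bigamma_integrand_le_rescaled_gamma_integrand x t : x <= 1 -> 0 < t < 1 ->
  bigamma_integrand x t <= rescaled_gamma_integrand x t.
Proof.
  intros Hx Ht. apply Rmult_le_compat_l; [left; apply Rpower_gt_0|].
  apply Rle_Rpower_l_nonpos; [lra | split; [lra | apply le_neg_ln_1_minus; lra]].
Qed.

Lemma bigamma_integrand_le_1 x t : 1 <= x -> 0 < t < 1 -> bigamma_integrand x t <= 1.
Proof.
  intros Hx Ht. pose proof (neg_ln_gt_0 t Ht). pose proof (neg_ln_gt_0 (1 - t) ltac:(lra)).
  unfold bigamma_integrand. rewrite Rpower_mult_distr by lra.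
  apply Rpower_le_1; [lra|]. split; [nra | apply neg_ln_mul_neg_ln_1_minus_le_1, Ht].
Qed.

(* Whichever of [t] and [1 - t] is at least [1/2] has power at most [2 ^ (1 - x) <= 2]. *)
Lemma rescaled_gamma_integrand_le_beta_majorant x t : 0 < x <= 1 -> 0 < t < 1 ->
  rescaled_gamma_integrand x t <= beta_majorant x t.
Proof.
  intros Hx Ht. unfold rescaled_gamma_integrand, beta_majorant.
  pose proof (Rpower_gt_0 t (x - 1)). pose proof (Rpower_gt_0 (1 - t) (x - 1)).
  pose proof (Rpower_half_le_2 x ltac:(lra)).
  assert (Hlog : Rpower (- ln t) (x - 1) <= Rpower (1 - t) (x - 1)).
  { apply Rle_Rpower_l_nonpos; [lra | split; [lra|]].
    pose proof (ln_le_sub_1 t ltac:(lra)). lra. }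
  apply Rle_trans with (Rpower (1 - t) (x - 1) * Rpower t (x - 1)); [nra|].
  destruct (Rle_or_lt t (/ 2)).
  - assert (Rpower (1 - t) (x - 1) <= Rpower (/ 2) (x - 1))
      by (apply Rle_Rpower_l_nonpos; lra).
    nra.
  - assert (Rpower t (x - 1) <= Rpower (/ 2) (x - 1)) by (apply Rle_Rpower_l_nonpos; lra).
    nra.
Qed.

Lemma is_derive_beta_primitive x s : 0 < x -> 0 < s < 1 ->
  is_derive (fun t => 2 / x * (Rpower t x - Rpower (1 - t) x)) s (beta_majorant x s).
Proof.
  intros Hx Hs.
  assert (H1 : is_derive (fun t => Rpower (1 - t) x) s (-1 * (x * Rpower (1 - s) (x - 1)))).
  { apply (is_derive_comp (fun t => Rpower t x) (fun t => 1 - t)).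
    - apply is_derive_Rpower_l; lra.
    - auto_derive; [exact I | ring]. }
  replace (beta_majorant x s)
    with (2 / x * (x * Rpower s (x - 1) - -1 * (x * Rpower (1 - s) (x - 1))))
    by (unfold beta_majorant; field; lra).
  apply (is_derive_scal (fun t => Rpower t x - Rpower (1 - t) x)).
  apply (is_derive_minus (fun t => Rpower t x)); [apply is_derive_Rpower_l; lra | exact H1].
Qed.

Lemma RInt_beta_majorant_le x u v : 0 < x -> 0 < u -> u <= v -> v < 1 ->
  RInt (beta_majorant x) u v <= 4 / x.
Proof.
  intros Hx Hu Huv Hv.
  assert (HI : is_RInt (beta_majorant x) u v
     (2 / x * (Rpower v x - Rpower (1 - v) x) - 2 / x * (Rpower u x - Rpower (1 - u) x))).
  { apply (@is_RInt_derive R_CompleteNormedModule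
             (fun t => 2 / x * (Rpower t x - Rpower (1 - t) x))).
    - intros s Hs. rewrite Rmin_left, Rmax_right in Hs by lra.
      apply is_derive_beta_primitive; lra.
    - intros s Hs. rewrite Rmin_left, Rmax_right in Hs by lra.
      apply continuous_beta_majorant; lra. }
  rewrite (is_RInt_unique _ _ _ _ HI).
  pose proof (Rpower_le_1 v x ltac:(lra) ltac:(lra)).
  pose proof (Rpower_le_1 (1 - u) x ltac:(lra) ltac:(lra)).
  pose proof (Rpower_gt_0 (1 - v) x). pose proof (Rpower_gt_0 u x).
  assert (0 < 2 / x) by (apply Rdiv_lt_0_compat; lra).
  replace (4 / x) with (2 / x * 2) by (field; lra). nra.
Qed.

Lemma RInt_const_1_le_1 u v : 0 < u -> u <= v -> v < 1 -> RInt (fun _ => 1) u v <= 1.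
Proof. intros. rewrite RInt_const. unfold scal; simpl; unfold mult; simpl. lra. Qed.

Lemma exp_neg_div_lt_1 x t : 0 < x -> 0 < t -> exp (- t / x) < 1.
Proof.
  intros Hx Ht. rewrite <- exp_0. apply exp_increasing.
  assert (0 < t / x) by (apply Rdiv_lt_0_compat; lra). unfold Rdiv in *. lra.
Qed.

Lemma gamma_integrand_neg_ln x y : 0 < x -> 0 < y < 1 ->
  - x / y * gamma_integrand x (- x * ln y) = - Rpower x x * rescaled_gamma_integrand x y.
Proof.
  intros Hx Hy. unfold gamma_integrand, rescaled_gamma_integrand, Rpower.
  pose proof (neg_ln_gt_0 y Hy).
  replace (- x * ln y) with (x * - ln y) by ring. rewrite ln_mult by lra.
  replace (- x / y) with (- exp (ln x + - ln y))
    by (rewrite exp_plus, exp_Ropp, !exp_ln by lra; field; lra).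
  rewrite <- !Ropp_mult_distr_l, <- !exp_plus. f_equal. f_equal. ring.
Qed.

Lemma RInt_gamma_integrand x a b : 0 < x -> 0 < a -> 0 < b ->
  RInt (gamma_integrand x) a b
  = Rpower x x * RInt (rescaled_gamma_integrand x) (exp (- b / x)) (exp (- a / x)).
Proof.
  intros Hx Ha Hb.
  assert (Hin : forall t, 0 < t -> 0 < exp (- t / x) < 1)
    by (intros t Ht; split; [apply exp_pos | apply exp_neg_div_lt_1; assumption]).
  assert (Hinv : forall t, - x * ln (exp (- t / x)) = t) by (intros t; rewrite ln_exp; field; lra).
  pose proof (Hin a Ha). pose proof (Hin b Hb).
  assert (Hcomp := RInt_comp (gamma_integrand x) (fun s => - x * ln s) (fun s => - x / s)
                     (exp (- b / x)) (exp (- a / x))).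
  cbv beta in Hcomp. rewrite !Hinv in Hcomp.
  set (u := exp (- b / x)) in *. set (v := exp (- a / x)) in *.
  assert (Hseg : forall y, Rmin u v <= y <= Rmax u v -> 0 < y < 1).
  { intros y Hy. unfold Rmin, Rmax in Hy. destruct (Rle_dec u v); lra. }
  rewrite <- opp_RInt_swap, <- Hcomp.
  - rewrite (RInt_ext _ (fun y => scal (- Rpower x x) (rescaled_gamma_integrand x y))).
    + rewrite (RInt_scal (V := R_CompleteNormedModule)).
      * unfold opp, scal; simpl; unfold mult; simpl. ring.
      * apply (@ex_RInt_continuous R_CompleteNormedModule). intros y Hy.
        apply continuous_rescaled_gamma_integrand, Hseg, Hy.
    + intros y Hy. apply gamma_integrand_neg_ln; [exact Hx | apply Hseg; lra].
  - intros y Hy. pose proof (Hseg y Hy). apply continuous_gamma_integrand.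
    pose proof (neg_ln_gt_0 y ltac:(lra)). nra.
  - intros y Hy. pose proof (Hseg y Hy). split.
    + auto_derive; [lra | field; lra].
    + apply (@ex_derive_continuous R_AbsRing R_NormedModule). auto_derive. lra.
  - apply (@ex_RInt_continuous R_CompleteNormedModule). intros t Ht.
    apply continuous_gamma_integrand. unfold Rmin in Ht. destruct (Rle_dec _ _); lra.
Qed.

Lemma filterlim_exp_neg_div_p_infty x : 0 < x ->
  filterlim (fun t => exp (- t / x)) (Rbar_locally p_infty) (at_right 0).
Proof.
  intros Hx P [eps HP]. exists (- x * ln eps). intros t Ht.
  apply HP; [|apply exp_pos]. apply ball_R.
  rewrite Rminus_0_r, Rabs_pos_eq by (left; apply exp_pos).
  rewrite <- (exp_ln eps) by apply cond_pos. apply exp_increasing.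
  apply (Rmult_lt_reg_r x); [exact Hx|]. unfold Rdiv. rewrite Rmult_assoc, Rinv_l by lra. lra.
Qed.

Lemma filterlim_exp_neg_div_0 x : 0 < x ->
  filterlim (fun t => exp (- t / x)) (at_right 0) (at_left 1).
Proof.
  intros Hx P [eps HP].
  assert (Hxe : 0 < x * eps) by (apply Rmult_lt_0_compat; [exact Hx | apply cond_pos]).
  exists (mkposreal _ Hxe). intros t Ht Ht0.
  change (Rabs (t - 0) < x * eps) in Ht. rewrite Rminus_0_r, Rabs_pos_eq in Ht by lra.
  pose proof (exp_neg_div_lt_1 x t Hx Ht0) as Hlt1.
  apply HP; [|exact Hlt1]. apply ball_R. rewrite Rabs_left1 by lra.
  assert (t / x < eps) by (apply Rlt_div_l; lra).
  pose proof (exp_ineq1_le (- t / x)). unfold Rdiv in *. lra.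
Qed.

Lemma filter_prod_at_right_0_p_infty :
  filter_prod (at_right 0) (Rbar_locally p_infty) (fun ab => 0 < fst ab /\ 0 < snd ab).
Proof.
  apply Filter_prod with (fun t => 0 < t) (fun t => 0 < t).
  - exists (mkposreal 1 Rlt_0_1). intros t _ Ht. exact Ht.
  - exists 0. intros t Ht. exact Ht.
  - intros a b Ha Hb. split; assumption.
Qed.

Lemma is_lim_RInt_gamma_integrand x l : 0 < x ->
  is_lim_RInt (rescaled_gamma_integrand x) (at_right 0) (at_left 1) l ->
  is_lim_RInt (gamma_integrand x) (at_right 0) (Rbar_locally p_infty) (Rpower x x * l).
Proof.
  intros Hx Hl.
  apply (is_lim_RInt_reparam (Ga := at_right 0) (Gb := at_left 1) (gamma_integrand x)
           (rescaled_gamma_integrand x) (fun t => exp (- t / x)));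
    [apply filterlim_exp_neg_div_0, Hx | apply filterlim_exp_neg_div_p_infty, Hx | | exact Hl].
  eapply filter_imp; [|apply filter_prod_at_right_0_p_infty].
  intros [a b] [Ha Hb]. apply RInt_gamma_integrand; assumption.
Qed.

Lemma EulerGamma_div_Rpower x l : 0 < x ->
  is_lim_RInt (rescaled_gamma_integrand x) (at_right 0) (at_left 1) l ->
  EulerGamma x / Rpower x x = l.
Proof.
  intros Hx Hl. pose proof (Rpower_gt_0 x x).
  apply (Rmult_eq_reg_l (Rpower x x)); [|lra]. field_simplify; [|lra].
  apply is_RInt_gen_unique, is_RInt_gen_of_is_lim_RInt;
    [|apply is_lim_RInt_gamma_integrand; assumption].
  eapply filter_imp; [|apply filter_prod_at_right_0_p_infty].
  intros [a b] [Ha Hb]. apply (@ex_RInt_continuous R_CompleteNormedModule). intros t Ht.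
  apply continuous_gamma_integrand. simpl in *. unfold Rmin in Ht. destruct (Rle_dec _ _); lra.
Qed.

Lemma Bigamma_diag_eq x l :
  is_lim_RInt (bigamma_integrand x) (at_right 0) (at_left 1) l -> Bigamma x x = l.
Proof.
  intros Hl. apply is_RInt_gen_unique, is_RInt_gen_of_is_lim_RInt; [|exact Hl].
  eapply filter_imp; [|apply (filter_prod_interval 0 1 Rlt_0_1)].
  intros [u v] Huv; simpl in *.
  apply (ex_RInt_open 0 1); [apply continuous_bigamma_integrand | lra..].
Qed.

Lemma ex_lim_RInt_rescaled_gamma_integrand x : 0 < x ->
  exists l, is_lim_RInt (rescaled_gamma_integrand x) (at_right 0) (at_left 1) l.
Proof.
  intros Hx. destruct (Rle_or_lt 1 x) as [Hx1 | Hx1].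
  - apply (is_lim_RInt_dominated 0 1 _ (fun _ => 1) 1 Rlt_0_1).
    + apply continuous_rescaled_gamma_integrand.
    + intros; apply continuous_const.
    + intros t Ht. split; [apply rescaled_gamma_integrand_ge_0|].
      eapply Rle_trans; [apply rescaled_gamma_integrand_le_bigamma_integrand
                        | apply bigamma_integrand_le_1]; assumption.
    + apply RInt_const_1_le_1.
  - apply (is_lim_RInt_dominated 0 1 _ (beta_majorant x) (4 / x) Rlt_0_1).
    + apply continuous_rescaled_gamma_integrand.
    + apply continuous_beta_majorant.
    + intros t Ht. split; [apply rescaled_gamma_integrand_ge_0|].
      apply rescaled_gamma_integrand_le_beta_majorant; [lra | exact Ht].
    + intros u v. apply RInt_beta_majorant_le, Hx.
Qed.

Lemma ex_lim_RInt_bigamma_integrand x : 0 < x ->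
  exists l, is_lim_RInt (bigamma_integrand x) (at_right 0) (at_left 1) l.
Proof.
  intros Hx. destruct (Rle_or_lt 1 x) as [Hx1 | Hx1].
  - apply (is_lim_RInt_dominated 0 1 _ (fun _ => 1) 1 Rlt_0_1).
    + apply continuous_bigamma_integrand.
    + intros; apply continuous_const.
    + intros t Ht. split; [apply bigamma_integrand_ge_0 | apply bigamma_integrand_le_1; assumption].
    + apply RInt_const_1_le_1.
  - apply (is_lim_RInt_dominated 0 1 _ (beta_majorant x) (4 / x) Rlt_0_1).
    + apply continuous_bigamma_integrand.
    + apply continuous_beta_majorant.
    + intros t Ht. split; [apply bigamma_integrand_ge_0|].
      eapply Rle_trans; [apply bigamma_integrand_le_rescaled_gamma_integrand
                        | apply rescaled_gamma_integrand_le_beta_majorant]; lra.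
    + intros u v. apply RInt_beta_majorant_le, Hx.
Qed.

Lemma Bigamma_diag_ge x : 1 <= x -> EulerGamma x / Rpower x x <= Bigamma x x.
Proof.
  intros Hx.
  destruct (ex_lim_RInt_rescaled_gamma_integrand x ltac:(lra)) as [lG HG].
  destruct (ex_lim_RInt_bigamma_integrand x ltac:(lra)) as [lB HB].
  rewrite (EulerGamma_div_Rpower x lG), (Bigamma_diag_eq x lB) by (assumption || lra).
  apply (is_lim_RInt_le 0 1 (rescaled_gamma_integrand x) (bigamma_integrand x) lG lB Rlt_0_1);
    [apply continuous_rescaled_gamma_integrand | apply continuous_bigamma_integrand | | exact HG
    | exact HB].
  intros t Ht. apply rescaled_gamma_integrand_le_bigamma_integrand; assumption.
Qed.

Lemma Bigamma_diag_le x : 0 < x <= 1 -> Bigamma x x <= EulerGamma x / Rpower x x.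
Proof.
  intros Hx.
  destruct (ex_lim_RInt_rescaled_gamma_integrand x ltac:(lra)) as [lG HG].
  destruct (ex_lim_RInt_bigamma_integrand x ltac:(lra)) as [lB HB].
  rewrite (EulerGamma_div_Rpower x lG), (Bigamma_diag_eq x lB) by (assumption || lra).
  apply (is_lim_RInt_le 0 1 (bigamma_integrand x) (rescaled_gamma_integrand x) lB lG Rlt_0_1);
    [apply continuous_bigamma_integrand | apply continuous_rescaled_gamma_integrand | | exact HB
    | exact HG].
  intros t Ht. apply bigamma_integrand_le_rescaled_gamma_integrand; [lra | exact Ht].
Qed.

Theorem mainTheorem7 :
  (forall x : R, 1 <= x -> Bigamma x x >= EulerGamma x / Rpower x x) /\
  (forall x : R, 0 < x -> x <= 1 -> Bigamma x x <= EulerGamma x / Rpower x x).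
Proof.
  split.
  - intros x Hx. apply Rle_ge, Bigamma_diag_ge, Hx.
  - intros x Hx0 Hx1. apply Bigamma_diag_le. lra.
Qed.
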